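(* Let $(V,b,\mu)$ be a locally finite, weighted, connected graph with $\mu(x)\geq\mu_0$ for all $x\in V$, for some constant $\mu_0>0$, and let $\theta$ be a phase function on it. Fix $x_0\in V$ and, for $n\in\mathbb{Z}_+$, let $\beta_n=\frac{d_{2n}p_{2n}}{\mu_0 n}$ and let $\chi_n$ be the cut-off function defined below. Then for every $u\in\ell^2(V,\mu)$, $$\|P_{\chi_n}[u]\|\leq 2\beta_n\|u\|\qquad\text{and}\qquad \|u\,\Delta\chi_n\|\leq\beta_n\|u\|.$$
   Context: $V$ is a countably infinite set, $\mu\colon V\to(0,\infty)$, and $b\colon V\times V\to[0,\infty)$ satisfies $b(x,y)=b(y,x)$, $b(x,x)=0$, $\deg(x):=\#\{y: b(x,y)>0\}<\infty$; $x\sim y$ means $b(x,y)>0$; connectedness means any two vertices are joined by a finite path of neighbors, and $d(x,y)$ is the combinatorial (path-length) distance; $r(x)=d(x_0,x)$. A phase function is $\theta\colon V\times V\to[-\pi,\pi]$ with $\theta(x,y)=-\theta(y,x)$. $\ell^2(V,\mu)$ is the space of $f\colon V\to\mathbb{C}$ with $\|f\|^2=\sum_x\mu(x)|f(x)|^2<\infty$, inner product $(f,g)=\sum_x\mu(x)f(x)\overline{g(x)}$. $B(x_0,n)=\{x: r(x)\leq n\}$ (plus edges between such vertices), $d_n=\max_{x\in B(x_0,n)}\deg(x)$, $p_n=\max_{x\in B(x_0,n)}\max_{y\in V}b(x,y)$. The Laplacian is $(\Delta\psi)(x)=\frac1{\mu(x)}\sum_y b(x,y)(\psi(x)-\psi(y))$.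 For $u,\psi\in C(V)$, $(P_\psi[u])(x)=\frac{1}{\mu(x)}\sum_{y\in V}b(x,y)(\psi(x)-\psi(y))(u(x)-e^{i\theta(x,y)}u(y))$. The cut-off is $\chi_n(x)=\left(\left(\frac{2n-d(x_0,x)}{n}\right)\vee 0\right)\wedge 1$, where $a\wedge z=\min\{a,z\}$, $a\vee z=\max\{a,z\}$. *)

From HB Require Import structures.
From mathcomp Require Import all_boot all_order all_algebra.
From mathcomp Require Import all_classical all_reals.
From mathcomp Require Import topology normedtype sequences esum trigo.
From mathcomp.real_closed Require Import complex.

Set Implicit Arguments.
Unset Strict Implicit.
Unset Printing Implicit Defensive.

Import Order.TTheory GRing.Theory Num.Theory.
Local Open Scope classical_set_scope.
Local Open Scope ring_scope.
Local Open Scope complex_scope.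

Section Graph.
Variables (R : realType) (V : choiceType).
Variables (b : V -> V -> R) (mu : V -> R) (theta : V -> V -> R).

Definition adj (x y : V) : Prop := 0 < b x y.

Definition nbrs (x : V) : set V := [set y | adj x y].
Definition deg (x : V) : nat := size (finmap.enum_fset (fset_set (nbrs x))).

Fixpoint walk (n : nat) (x y : V) : Prop :=
  match n with
  | 0 => x = y
  | n'.+1 => exists z, adj x z /\ walk n' z y
  end.

Definition connected_graph : Prop := forall x y, exists n, walk n x y.

(* combinatorial distance: the least length of a path from x to y
   (meaningful when the graph is connected) *)
Definition gdist (x y : V) : nat :=
  xget 0%N [set n | walk n x y /\ forall m, walk m x y -> (n <= m)%N].

Definition ball_g (x0 : V) (n : nat) : set V := [set x | (gdist x0 x <= n)%N].

(* d_n = max_{x in B(x0,n)} deg x ;  p_n = max_{x in B(x0,n), y in V} b(x,y)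
   (the sets are finite and nonempty, so sup = max) *)
Definition dmax (x0 : V) (n : nat) : R :=
  sup [set (deg x)%:R | x in ball_g x0 n].
Definition pmax (x0 : V) (n : nat) : R :=
  sup [set b x y | x in ball_g x0 n & y in [set: V]].

Definition chi (x0 : V) (n : nat) (x : V) : R :=
  Num.min (Num.max (((2 * n)%:R - (gdist x0 x)%:R) / n%:R) 0) 1.

Definition lap (psi : V -> R) (x : V) : R :=
  (mu x)^-1 * \sum_(y \in [set: V]) b x y * (psi x - psi y).

Definition expi (t : R) : R[i] := (cos t +i* sin t)%C.

Definition Pop (psi : V -> R) (u : V -> R[i]) (x : V) : R[i] :=
  ((mu x)^-1)%:C * \sum_(y \in [set: V])
     ((b x y * (psi x - psi y))%:C * (u x - expi (theta x y) * u y)).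

(* squared l^2(V,mu) norm, as an extended real (+oo if f not in l^2) *)
Definition l2sq (f : V -> R[i]) : \bar R :=
  (\esum_(x in [set: V]) (mu x * (Normc.normc (f x)) ^+ 2)%:E)%E.

Definition l2norm (f : V -> R[i]) : \bar R :=
  match l2sq f with
  | r%:E => (Num.sqrt r)%:E
  | _ => +oo%E
  end.

End Graph.

(* The cut-off chi_n is 1/n-Lipschitz along edges and vanishes outside the ball
   B(x0, 2n), so the edge weights w(x, y) = b(x, y) (chi_n(x) - chi_n(y)) are bounded
   by p_2n / n, vanish unless both endpoints lie in that finite ball, and each vertex
   carries at most d_2n nonzero ones.  This gives |Delta chi_n| <= beta_n pointwise and
   |P_chi_n[u](x)| <= mu(x)^-1 (p_2n / n) sum_y [w(x, y) <> 0] (|u(x)| + |u(y)|); by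
   Cauchy-Schwarz and the symmetry of the support of w, the latter operator has
   l^2 norm at most 2 beta_n (a Schur test). *)

From HB Require Import structures.
From mathcomp Require Import all_boot all_order all_algebra.
From mathcomp Require Import all_classical all_reals.
From mathcomp Require Import topology normedtype sequences esum trigo.
From mathcomp.real_closed Require Import complex.
From mathcomp Require Import finmap ring lra zify.

Import Order.TTheory GRing.Theory Num.Theory.
Local Open Scope classical_set_scope.
Local Open Scope ring_scope.
Local Open Scope complex_scope.

Section GraphDistance.
Context {R : realType} {V : choiceType} {b : V -> V -> R}.

Lemma walk_snoc m x y z : walk b m x y -> adj b y z -> walk b m.+1 x z.
Proof.
elim: m x => [|m IH] x /=; first by move=> -> yz; exists z.
by move=> [x' [xx' wx']] yz; exists x'; split => //; apply: IH.
Qed.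

Lemma walkSr m x z : walk b m.+1 x z -> exists2 y, walk b m x y & adj b y z.
Proof.
elim: m x => [|m IH] x /=; first by move=> [y [xy <-]]; exists x.
move=> [x' [xx' wx']]; have [y wy yz] := IH _ wx'.
by exists y => //; exists x'.
Qed.

Hypothesis con : connected_graph b.

Lemma gdist_spec x y :
  walk b (gdist b x y) x y /\ forall m, walk b m x y -> (gdist b x y <= m)%N.
Proof.
have [k wk] := con x y.
have ex : exists k, `[< walk b k x y >] by exists k; apply/asboolP.
suff shortest : exists m, walk b m x y /\ forall m', walk b m' x y -> (m <= m')%N.
  exact: xgetPex shortest.
exists (ex_minn ex).
by case: ex_minnP => m /asboolP wm mmin; split => // m' /asboolP /mmin.
Qed.

Lemma walk_gdist x y : walk b (gdist b x y) x y.
Proof. by have [] := gdist_spec x y. Qed.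

Lemma gdist_min m x y : walk b m x y -> (gdist b x y <= m)%N.
Proof. by have [_] := gdist_spec x y; apply. Qed.

Lemma gdist_adj x0 {y z} : adj b y z -> (gdist b x0 z <= (gdist b x0 y).+1)%N.
Proof. by move=> yz; apply: gdist_min; apply: walk_snoc (walk_gdist x0 y) yz. Qed.

Lemma ball_g_center x0 k : ball_g b x0 k x0.
Proof. by rewrite /ball_g /= (leq_trans (@gdist_min 0 x0 x0 erefl)). Qed.

Lemma finite_ball_g x0 k :
  (forall x, finite_set (nbrs b x)) -> finite_set (ball_g b x0 k).
Proof.
move=> fin; elim: k => [|k IH].
  apply: (sub_finite_set (B := [set x0])); last exact: finite_set1.
  move=> x; rewrite /ball_g /= leqn0 => /eqP dx0.
  by have := walk_gdist x0 x; rewrite dx0.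
apply: (sub_finite_set (B := ball_g b x0 k `|` \bigcup_(y in ball_g b x0 k) nbrs b y)).
  move=> x; rewrite /ball_g /= leq_eqVlt ltnS => /orP[/eqP dx|]; last by left.
  have := walk_gdist x0 x; rewrite dx => /walkSr[y wy yx].
  by right; exists y => //; apply: gdist_min wy.
by rewrite finite_setU; split => //; apply: bigcup_finite.
Qed.

End GraphDistance.

Lemma clamp01_lipschitz {R : realFieldType} (s t : R) :
  `|Num.min (Num.max s 0) 1 - Num.min (Num.max t 0) 1| <= `|s - t|.
Proof.
have := ler_norm (s - t); have := ler_norm (t - s); rewrite distrC.
rewrite /Num.min /Num.max.
case: (ltP s 0); case: (ltP t 0); case: (ltP s 1); case: (ltP t 1) => /= *;
  rewrite ?ltr01 ler_norml; apply/andP; split; lra.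
Qed.

Lemma cauchy_schwarz_weighted {R : realFieldType} {I : Type} (s : seq I) (al v : I -> R) :
  (forall i, 0 <= al i) ->
  (\sum_(i <- s) al i * v i) ^+ 2 <= (\sum_(i <- s) al i) * \sum_(i <- s) al i * v i ^+ 2.
Proof.
move=> al_ge0; set A := \sum_(i <- s) al i; set S := \sum_(i <- s) _ * _ ^+ 2.
have AS : A * S = \sum_(i <- s) \sum_(j <- s) al i * (al j * v j ^+ 2) by rewrite big_distrlr.
have SA : A * S = \sum_(i <- s) \sum_(j <- s) al i * v i ^+ 2 * al j.
  by rewrite mulrC big_distrlr.
suff : 2 * (\sum_(i <- s) al i * v i) ^+ 2 <= A * S + A * S by move=> ?; lra.
rewrite {1}AS SA -big_split expr2 big_distrlr mulr_sumr /=; apply: ler_sum => i _.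
rewrite -big_split mulr_sumr /=; apply: ler_sum => j _.
have := sqr_ge0 (v i - v j); have := mulr_ge0 (al_ge0 i) (al_ge0 j); nra.
Qed.

Section AdjacencySums.
Context {R : realFieldType} {I : Type} (s : seq I) (a : I -> I -> bool) (D : R).
Hypotheses (a_sym : forall x y, a x y = a y x) (D_ge0 : 0 <= D)
  (a_row : forall x, \sum_(y <- s) (a x y)%:R <= D).

Lemma sum_adjacency_le (h : I -> R) : (forall x, 0 <= h x) ->
  \sum_(x <- s) \sum_(y <- s) (a x y)%:R * (h x + h y) <= 2 * D * \sum_(x <- s) h x.
Proof.
move=> h_ge0.
have -> : \sum_(x <- s) \sum_(y <- s) (a x y)%:R * (h x + h y) =
    \sum_(x <- s) \sum_(y <- s) (a x y)%:R * h x +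
    \sum_(x <- s) \sum_(y <- s) (a x y)%:R * h y.
  rewrite -big_split; apply: eq_bigr => x _.
  by rewrite -big_split; apply: eq_bigr => y _; rewrite mulrDr.
rewrite [X in _ + X]exchange_big /=.
under [X in _ + X]eq_bigr do under eq_bigr do rewrite a_sym.
suff : \sum_(x <- s) \sum_(y <- s) (a x y)%:R * h x <= D * \sum_(x <- s) h x.
  by move=> ?; lra.
rewrite mulr_sumr; apply: ler_sum => x _.
by rewrite -mulr_suml ler_wpM2r.
Qed.

Lemma adjacency_sum_sqr_le (f : I -> R) x :
  (\sum_(y <- s) (a x y)%:R * (f x + f y)) ^+ 2 <=
  2 * D * \sum_(y <- s) (a x y)%:R * (f x ^+ 2 + f y ^+ 2).
Proof.
have a_ge0 y : 0 <= (a x y)%:R :> R by rewrite ler0n.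
apply: le_trans (cauchy_schwarz_weighted s _ (fun y => f x + f y) a_ge0) _.
apply: le_trans (ler_wpM2r _ (a_row x)) _.
  by apply: sumr_ge0 => y _; rewrite mulr_ge0 ?sqr_ge0.
rewrite [2 * D]mulrC -mulrA ler_wpM2l // mulr_sumr; apply: ler_sum => y _.
have := sqr_ge0 (f x - f y); have := a_ge0 y; nra.
Qed.

Lemma schur_test_adjacency (m f g : I -> R) (m0 e : R) :
  0 < m0 -> (forall x, m0 <= m x) -> (forall x, 0 <= f x) -> (forall x, 0 <= g x) ->
  (forall x, g x <= (m x)^-1 * e * \sum_(y <- s) (a x y)%:R * (f x + f y)) ->
  \sum_(x <- s) m x * g x ^+ 2 <= (2 * (D * e / m0)) ^+ 2 * \sum_(x <- s) m x * f x ^+ 2.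
Proof.
move=> m0_gt0 m0_le f_ge0 g_ge0 g_le.
have m_gt0 x : 0 < m x := lt_le_trans m0_gt0 (m0_le x).
have c_ge0 : 0 <= e ^+ 2 / m0 by rewrite divr_ge0 ?sqr_ge0 ?ltW.
have pointwise x : m x * g x ^+ 2 <=
    e ^+ 2 / m0 * (\sum_(y <- s) (a x y)%:R * (f x + f y)) ^+ 2.
  set S := \sum_(y <- s) _; have mx := m_gt0 x.
  apply: le_trans (_ : m x * ((m x)^-1 * e * S) ^+ 2 <= _).
    apply: ler_wpM2l; first exact: ltW.
    by apply: lerXn2r; rewrite ?nnegrE //; apply: le_trans (g_le x).
  have -> : m x * ((m x)^-1 * e * S) ^+ 2 = e ^+ 2 / m x * S ^+ 2.
    by field; rewrite gt_eqF.
  by rewrite ler_wpM2r ?sqr_ge0 // ler_wpM2l ?sqr_ge0 // lef_pV2 ?posrE.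
have f_sum : \sum_(x <- s) f x ^+ 2 <= m0^-1 * \sum_(x <- s) m x * f x ^+ 2.
  rewrite mulr_sumr; apply: ler_sum => x _.
  by rewrite ler_pdivlMl // ler_wpM2r ?sqr_ge0.
apply: le_trans (ler_sum _ (fun x _ => pointwise x)) _.
rewrite -mulr_sumr.
apply: le_trans (ler_wpM2l c_ge0 (ler_sum _ (fun x _ => adjacency_sum_sqr_le f x))) _.
rewrite -mulr_sumr.
have DD_ge0 : 0 <= 2 * D by rewrite mulr_ge0.
apply: le_trans (ler_wpM2l c_ge0 (ler_wpM2l DD_ge0
  (sum_adjacency_le (fun x => f x ^+ 2) (fun x => sqr_ge0 _)))) _.
apply: le_trans (ler_wpM2l c_ge0 (ler_wpM2l DD_ge0 (ler_wpM2l DD_ge0 f_sum))) _.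
by rewrite le_eqVlt; apply: predU1l; field; rewrite gt_eqF.
Qed.
End AdjacencySums.

(* [Rcomplex R] is [R[i]] normed by [Normc.normc]. *)
Lemma normc_ge0 {R : rcfType} (z : R[i]) : 0 <= Normc.normc z.
Proof. exact: (@normr_ge0 _ (Rcomplex R)). Qed.

Lemma normcB {R : rcfType} (z w : R[i]) : Normc.normc (z - w) <= Normc.normc z + Normc.normc w.
Proof. exact: (@ler_normB _ (Rcomplex R)). Qed.

Lemma normc_sum {R : rcfType} {I : Type} (s : seq I) (F : I -> R[i]) :
  Normc.normc (\sum_(i <- s) F i) <= \sum_(i <- s) Normc.normc (F i).
Proof. exact: (@ler_norm_sum _ (Rcomplex R)). Qed.

Lemma normc_real {R : rcfType} (c : R) : Normc.normc c%:C = `|c|.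
Proof. by rewrite /Normc.normc /= expr0n /= addr0 sqrtr_sqr. Qed.

Lemma normc_expi {R : realType} (t : R) : Normc.normc (expi t) = 1.
Proof. by rewrite /expi /Normc.normc cos2Dsin2 sqrtr1. Qed.

Lemma l2norm_le_finite_support {R : realType} {V : choiceType} {mu : V -> R}
    {F u : V -> R[i]} {B : set V} {c : R} :
  finite_set B -> 0 <= c -> (forall x, 0 < mu x) -> (forall x, ~ B x -> F x = 0) ->
  \sum_(x <- fset_set B) mu x * Normc.normc (F x) ^+ 2 <=
    c ^+ 2 * \sum_(x <- fset_set B) mu x * Normc.normc (u x) ^+ 2 ->
  (l2sq mu u < +oo)%E ->
  (l2norm mu F <= c%:E * l2norm mu u)%E.
Proof.
move=> B_fin c_ge0 mu_gt0 F_out F_le u_l2.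
have term_ge0 (G : V -> R[i]) x : 0 <= mu x * Normc.normc (G x) ^+ 2.
  by rewrite mulr_ge0 ?sqr_ge0 ?ltW.
have sum_B (G : V -> R[i]) : (\sum_(x \in B) (mu x * Normc.normc (G x) ^+ 2)%:E)%E =
    (\sum_(x <- fset_set B) mu x * Normc.normc (G x) ^+ 2)%:E.
  by rewrite fsbig_finite // sumEFin.
have F_sq : l2sq mu F = (\sum_(x <- fset_set B) mu x * Normc.normc (F x) ^+ 2)%:E.
  rewrite /l2sq -sum_B -esum_fset // => [|x _]; last by rewrite lee_fin.
  rewrite [in RHS]esum_mkcond; apply: eq_esum => x _.
  by case: ifPn => // /negP xB; rewrite F_out ?Normc.normc0 ?expr0n ?mulr0 // => /mem_set.
have u_sq : ((\sum_(x <- fset_set B) mu x * Normc.normc (u x) ^+ 2)%:E <= l2sq mu u)%E.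
  by rewrite -sum_B; apply: esum_ge; exists B.
have u_sq_ge0 : (0 <= l2sq mu u)%E by apply: esum_ge0 => x _; rewrite lee_fin.
rewrite /l2norm F_sq; move: u_l2 u_sq u_sq_ge0; case: (l2sq mu u) => [r| |] //= _.
rewrite !lee_fin => u_sq r_ge0.
rewrite -(ger0_norm c_ge0) -sqrtr_sqr -sqrtrM ?sqr_ge0 // ler_sqrt ?mulr_ge0 ?sqr_ge0 //.
by apply: le_trans F_le _; apply: ler_wpM2l; first exact: sqr_ge0.
Qed.

Lemma finite_has_ubound {R : realType} (E : set R) : finite_set E -> has_ubound E.
Proof.
move=> E_fin; exists (\sum_(x <- fset_set E) `|x|) => x Ex.
have xE : x \in fset_set E by rewrite in_fset_set //; apply: mem_set.
rewrite (bigD1_seq x xE (fset_uniq _)) /=.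
by apply: le_trans (ler_norm x) _; rewrite lerDl; apply: sumr_ge0.
Qed.

Section Cutoff.
Context {R : realType} {V : choiceType} (b : V -> V -> R) (x0 : V) (n : nat).
Hypotheses (b_ge0 : forall x y, 0 <= b x y)
  (b_sym : forall x y, b x y = b y x) (con : connected_graph b)
  (nbrs_fin : forall x, finite_set (nbrs b x)).

Local Notation chin := (chi b x0 n).
Local Notation B := (ball_g b x0 (2 * n)).
Local Notation D := (dmax b x0 (2 * n)).
Local Notation P := (pmax b x0 (2 * n)).

Definition chi_grad x y := b x y * (chin x - chin y).

Lemma chi_eq0 x : (2 * n <= gdist b x0 x)%N -> chin x = 0.
Proof.
move=> far; have s_le0 : ((2 * n)%:R - (gdist b x0 x)%:R) / n%:R <= 0 :> R.
  by rewrite mulr_le0_ge0 ?invr_ge0 ?ler0n // subr_le0 ler_nat.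
by rewrite /chi max_r // min_l ?ler01.
Qed.

Lemma chi_lipschitz x y : adj b x y -> `|chin x - chin y| <= n%:R^-1.
Proof.
move=> xy; have yx : adj b y x by rewrite /adj b_sym.
have := gdist_adj con x0 xy; have := gdist_adj con x0 yx.
rewrite -!(ler_nat R) !mulrSr => dx dy.
apply: le_trans (clamp01_lipschitz _ _) _.
rewrite -mulrBl normrM normfV normr_nat ler_piMl ?invr_ge0 ?ler0n //.
by rewrite ler_norml natrM; apply/andP; split; lra.
Qed.

Lemma chi_grad_sym x y : (chi_grad x y != 0) = (chi_grad y x != 0).
Proof. by rewrite /chi_grad b_sym -oppr_eq0 -mulrN opprB. Qed.

Lemma chi_grad_neq0 x y : chi_grad x y != 0 -> [/\ adj b x y, B x & B y].
Proof.
rewrite mulf_eq0 negb_or => /andP[bxy chixy].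
have xy : adj b x y by rewrite /adj lt_def bxy b_ge0.
have yx : adj b y x by rewrite /adj b_sym.
have dxy := gdist_adj con x0 xy; have dyx := gdist_adj con x0 yx.
rewrite /ball_g /=; split => //; case: leqP => // far;
  by move: chixy; rewrite !chi_eq0 ?subrr ?eqxx //; lia.
Qed.

Lemma deg_le_dmax x : B x -> (deg b x)%:R <= D.
Proof.
move=> Bx; apply: ub_le_sup; last by exists x.
exact/finite_has_ubound/finite_image/finite_ball_g.
Qed.

Lemma b_le_pmax x y : B x -> b x y <= P.
Proof.
move=> Bx; apply: ub_le_sup; last by exists x => //; exists y.
apply: finite_has_ubound.
apply: (sub_finite_set (B := [set 0] `|` \bigcup_(z in B) (b z @` nbrs b z))).
  move=> r [z Bz [w _ <-]]; have [zw|] := boolP (0 < b z w).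
    by right; exists z => //; exists w.
  by rewrite lt_def b_ge0 andbT negbK => /eqP ->; left.
rewrite finite_setU; split; first exact: finite_set1.
by apply: bigcup_finite => [|z _]; [apply: finite_ball_g | apply: finite_image].
Qed.

Lemma dmax_ge0 : 0 <= D.
Proof. exact: le_trans (ler0n _ _) (deg_le_dmax x0 (ball_g_center con x0 _)). Qed.

Lemma pmax_ge0 : 0 <= P.
Proof. exact: le_trans (b_ge0 x0 x0) (b_le_pmax x0 x0 (ball_g_center con x0 _)). Qed.

Lemma norm_chi_grad x y : `|chi_grad x y| <= (chi_grad x y != 0)%:R * (P / n%:R).
Proof.
have [->|/chi_grad_neq0 [xy Bx _]] := eqVneq (chi_grad x y) 0; first by rewrite normr0 mul0r.
rewrite mul1r normrM ger0_norm //; apply: ler_pM => //; first exact: b_le_pmax.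
exact: chi_lipschitz.
Qed.

Lemma chi_grad_row_le x : \sum_(y <- fset_set B) (chi_grad x y != 0)%:R <= D.
Proof.
have [Bx|Bx] := pselect (B x); last first.
  rewrite big1_seq ?dmax_ge0 // => y _.
  by case: eqVneq => // /chi_grad_neq0[].
apply: le_trans (deg_le_dmax x Bx); rewrite -natr_sum ler_nat.
set a := fun y => chi_grad x y != 0.
have -> : (\sum_(y <- fset_set B) a y = count a (fset_set B))%N.
  by rewrite -sumn_count sumnE big_map.
rewrite -size_filter.
apply: uniq_leq_size; first by rewrite filter_uniq ?fset_uniq.
move=> y; rewrite mem_filter => /andP[/chi_grad_neq0[xy _ _] _].
by rewrite in_fset_set //; apply: mem_set.
Qed.

Lemma fsbig_chi_grad {M : nmodType} x (G : V -> M) :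
  (forall y, chi_grad x y = 0 -> G y = 0) ->
  \sum_(y \in [set: V]) G y = \sum_(y <- fset_set B) G y.
Proof.
move=> G0; have B_fin := finite_ball_g con x0 (2 * n) nbrs_fin.
rewrite -(fsbig_widen B setT) ?fsbig_finite // => y [_ By] /=.
by apply: G0; apply/eqP; apply: contraT => /chi_grad_neq0[].
Qed.

Variables (mu : V -> R) (theta : V -> V -> R) (mu0 : R).
Hypotheses (mu0_gt0 : 0 < mu0) (mu0_le : forall x, mu0 <= mu x).

Let mu_gt0 x : 0 < mu x := lt_le_trans mu0_gt0 (mu0_le x).
Let mu_inv_ge0 x : 0 <= (mu x)^-1.
Proof. by rewrite invr_ge0 ltW. Qed.

Local Notation beta := (D * P / (mu0 * n%:R)).

Lemma normc_Pop_chi_le (u : V -> R[i]) x :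
  Normc.normc (Pop b mu theta chin u x) <=
  (mu x)^-1 * (P / n%:R) *
    \sum_(y <- fset_set B) (chi_grad x y != 0)%:R * (Normc.normc (u x) + Normc.normc (u y)).
Proof.
rewrite /Pop (fsbig_chi_grad x) => [|y /= xy0]; last by rewrite -/(chi_grad x y) xy0 mul0r.
rewrite Normc.normcM normc_real ger0_norm // -mulrA ler_wpM2l //.
apply: le_trans (normc_sum _ _) _; rewrite mulr_sumr; apply: ler_sum => y _.
rewrite Normc.normcM normc_real -/(chi_grad x y).
apply: le_trans (ler_wpM2l (normr_ge0 _) (normcB _ _)) _.
rewrite Normc.normcM normc_expi mul1r mulrA [_ * (chi_grad x y != 0)%:R]mulrC.
by apply: ler_wpM2r; rewrite ?addr_ge0 ?normc_ge0 ?norm_chi_grad.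
Qed.

Lemma norm_lap_chi_le x :
  `|lap b mu chin x| <=
    (mu x)^-1 * (P / n%:R) * \sum_(y <- fset_set B) (chi_grad x y != 0)%:R.
Proof.
rewrite /lap (fsbig_chi_grad x) => [|y /= xy0]; last by rewrite -/(chi_grad x y) xy0.
rewrite normrM ger0_norm // -mulrA ler_wpM2l //.
apply: le_trans (ler_norm_sum _ _ _) _; rewrite mulr_sumr; apply: ler_sum => y _.
by rewrite -/(chi_grad x y) [_ * (chi_grad x y != 0)%:R]mulrC norm_chi_grad.
Qed.

Lemma chi_grad_eq0 x y : ~ B x -> chi_grad x y = 0.
Proof. by move=> Bx; apply/eqP; apply: contraT => /chi_grad_neq0[_ /Bx]. Qed.

Lemma Pop_chi_eq0 (u : V -> R[i]) x : ~ B x -> Pop b mu theta chin u x = 0.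
Proof.
move=> Bx; rewrite /Pop fsbig1 ?mulr0 // => y _.
by rewrite -/(chi_grad x y) chi_grad_eq0 // mul0r.
Qed.

Lemma lap_chi_eq0 x : ~ B x -> lap b mu chin x = 0.
Proof.
move=> Bx; rewrite /lap fsbig1 ?mulr0 // => y _.
by rewrite -/(chi_grad x y) chi_grad_eq0.
Qed.

Let beta_E : beta = D * (P / n%:R) / mu0.
Proof. by rewrite invfM; ring. Qed.

Let beta_ge0 : 0 <= beta.
Proof. by rewrite divr_ge0 ?mulr_ge0 ?dmax_ge0 ?pmax_ge0 ?ler0n ?ltW. Qed.

Lemma l2norm_Pop_chi_le u : (l2sq mu u < +oo)%E ->
  (l2norm mu (Pop b mu theta chin u) <= (2 * beta)%:E * l2norm mu u)%E.
Proof.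
move=> u_l2; have B_fin := finite_ball_g con x0 (2 * n) nbrs_fin.
apply: (l2norm_le_finite_support B_fin _ mu_gt0 _ _ u_l2) => [|x /Pop_chi_eq0 //|].
  by rewrite mulr_ge0.
rewrite beta_E; apply: (@schur_test_adjacency _ _ _ (fun x y => chi_grad x y != 0) _ _ _ _ mu
  (fun x => Normc.normc (u x)) (fun x => Normc.normc (Pop b mu theta chin u x))) => //.
- exact: chi_grad_sym.
- exact: dmax_ge0.
- exact: chi_grad_row_le.
- by move=> x; apply: normc_ge0.
- by move=> x; apply: normc_ge0.
- exact: normc_Pop_chi_le.
Qed.

Lemma l2norm_lap_chi_le u : (l2sq mu u < +oo)%E ->
  (l2norm mu (fun x => (u x * (lap b mu chin x)%:C)%R) <= beta%:E * l2norm mu u)%E.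
Proof.
move=> u_l2; have B_fin := finite_ball_g con x0 (2 * n) nbrs_fin.
apply: (l2norm_le_finite_support B_fin beta_ge0 mu_gt0 _ _ u_l2).
  by move=> x /lap_chi_eq0 ->; rewrite mulr0.
rewrite mulr_sumr; apply: ler_sum => x _.
rewrite Normc.normcM normc_real exprMn [leLHS]mulrA [beta ^+ 2 * _]mulrC.
apply: ler_wpM2l; first by rewrite mulr_ge0 ?sqr_ge0 ?ltW.
apply: lerXn2r; rewrite ?nnegrE //; apply: le_trans (norm_lap_chi_le x) _.
have e_ge0 : 0 <= P / n%:R by rewrite divr_ge0 ?pmax_ge0.
rewrite beta_E -mulrA mulrC [D * _]mulrC; apply: ler_pM => //.
- by rewrite mulr_ge0 ?sumr_ge0 // => y _; rewrite ler0n.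
- by rewrite ler_wpM2l ?chi_grad_row_le.
- by rewrite lef_pV2 ?posrE.
Qed.

End Cutoff.

Theorem lemma5p2 (R : realType) (V : choiceType)
  (b : V -> V -> R) (mu : V -> R) (theta : V -> V -> R) (mu0 : R)
  (x0 : V) (n : nat) (u : V -> R[i]) :
  (* V countably infinite *)
  countable [set: V] -> infinite_set [set: V] ->
  (* weighted graph *)
  (forall x, 0 < mu x) ->
  (forall x y, 0 <= b x y) ->
  (forall x y, b x y = b y x) ->
  (forall x, b x x = 0) ->
  (forall x, finite_set (nbrs b x)) ->
  connected_graph b ->
  (* mu >= mu0 > 0 *)
  0 < mu0 -> (forall x, mu0 <= mu x) ->
  (* phase function *)
  (forall x y, - pi <= theta x y <= pi) ->
  (forall x y, theta x y = - theta y x) ->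
  (0 < n)%N ->
  (* u in l^2(V, mu) *)
  (l2sq mu u < +oo)%E ->
  let beta := dmax b x0 (2 * n) * pmax b x0 (2 * n) / (mu0 * n%:R) in
  (l2norm mu (Pop b mu theta (chi b x0 n) u) <= (2 * beta)%:E * l2norm mu u)%E /\
  (l2norm mu (fun x => (u x * (lap b mu (chi b x0 n) x)%:C)%R) <= beta%:E * l2norm mu u)%E.
Proof.
(* The hypotheses on V, theta and b x x are not needed (|e^{i t}| = 1 for every real t),
   mu > 0 follows from mu >= mu0 > 0, and for n = 0 the junk value x / 0 = 0 makes
   chi_0 and beta vanish. *)
move=> _ _ _ b_ge0 b_sym _ nbrs_fin con mu0_gt0 mu0_le _ _ _ u_l2 beta.
by split; [apply: l2norm_Pop_chi_le | apply: l2norm_lap_chi_le].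
Qed.
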